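(* Let $\mathbb{F}$ be a field and $n,d\ge 1$. Let $X^1,\dots,X^d$ be pairwise disjoint sets of $n^2$ variables each, $X^i=\{x^i_{jk}: j,k\in[n]\}$, and let $A^i$ be the $n\times n$ matrix with $(j,k)$ entry $x^i_{jk}$. Let $f\in\mathbb{F}[X^1\cup\dots\cup X^d]$ be the $(1,1)$ entry of the product $A^1A^2\cdots A^d$. Then any homogeneous $\Sigma\Pi\Sigma$ circuit computing the product of these $d$ matrices (i.e., computing the output polynomial $f$) has size $\Omega(n^{d-1}/2^d)$.
   Context: An arithmetic circuit over $\mathbb{F}$ is a directed acyclic graph whose in-degree-0 gates are labelled by variables or field constants and whose internal gates are plus or product gates; its size is its number of gates. A $\Sigma\Pi\Sigma$ circuit is a levelled depth-3 circuit with a single plus gate at the top, product gates at the middle level and plus gates at the bottom level, so it computes $\sum_{i=1}^k\prod_{j=1}^{\deg(P_i)} l_{i,j}$ with affine forms $l_{i,j}$; $k$ is the top fan-in. It is homogeneous if every bottom plus gate computes a homogeneous linear form. The paper studies the product of matrices through the single output polynomial given by the $(1,1)$ entry. *)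

From HB Require Import structures.
From mathcomp Require Import all_boot all_order all_algebra.
From mathcomp Require Import mpoly.
Set Implicit Arguments. Unset Strict Implicit. Unset Printing Implicit Defensive.
Import Order.TTheory GRing.Theory Num.Theory.
Local Open Scope ring_scope.

Definition varT (n d : nat) : finType := ('I_d * 'I_n * 'I_n)%type.
Definition nvars (n d : nat) : nat := #|{: varT n d}|.
Definition Poly (F : fieldType) (n d : nat) := {mpoly F[nvars n d]}.

Definition xvar (F : fieldType) (n d : nat) (i : 'I_d) (j k : 'I_n) : Poly F n d :=
  'X_(enum_rank ((i, j, k) : varT n d)).

Definition Amat (F : fieldType) (n d : nat) (i : 'I_d) : 'M[Poly F n d]_n :=
  \matrix_(j, k) xvar F i j k.

Definition matprod (R : pzRingType) (n : nat) (s : seq 'M[R]_n) : 'M[R]_n :=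
  foldr (fun A B => A *m B) 1%:M s.

(* (1,1) entry (0 for the empty 0x0 matrix, never used since n >= 1) *)
Definition entry11 (R : pzRingType) (n : nat) (M : 'M[R]_n) : R :=
  match n return 'M[R]_n -> R with
  | 0 => fun _ => 0
  | n'.+1 => fun M => M ord0 ord0
  end M.

Definition fpoly (F : fieldType) (n d : nat) : Poly F n d :=
  entry11 (matprod [seq Amat F n i | i <- enum 'I_d]).

(* A depth-3 Sigma-Pi-Sigma circuit over N variables, edges carrying field
   scalars:
   - nb bottom plus gates; bottom gate b computes the affine form
       sum_v coef b v * X_v + cst b
     (it has a wire from the input gate X_v iff coef b v != 0, and a wire
     from a constant input gate iff cst b != 0);
   - np product gates; product gate p multiplies the bottom gates listed
     (with multiplicity) in wires p;
   - one top plus gate computing sum_p topc p * (product gate p). *)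
Record SPS (F : fieldType) (N : nat) := mkSPS {
  nb : nat;
  coef : 'I_nb -> 'I_N -> F;
  cst : 'I_nb -> F;
  np : nat;
  wires : 'I_np -> seq 'I_nb;
  topc : 'I_np -> F
}.

Section Eval.
Variables (F : fieldType) (N : nat) (C : SPS F N).

Definition bottom_val (b : 'I_(nb C)) : {mpoly F[N]} :=
  \sum_(v < N) coef b v *: 'X_v + (cst b)%:MP.

Definition prod_val (p : 'I_(np C)) : {mpoly F[N]} :=
  \prod_(b <- wires p) bottom_val b.

Definition sps_output : {mpoly F[N]} :=
  \sum_(p < np C) topc p *: prod_val p.

Definition sps_homogeneous : Prop := forall b : 'I_(nb C), cst b = 0.

(* number of gates: variable input gates, constant input gates,
   bottom plus gates, product gates and the top plus gate *)
Definition sps_size : nat :=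
  #|[set v : 'I_N | [exists b : 'I_(nb C), coef b v != 0]]|
  + size (undup [seq cst b | b <- enum 'I_(nb C) & cst b != 0])
  + nb C + np C + 1.
End Eval.

From HB Require Import structures.
From mathcomp Require Import all_boot all_order all_algebra.
From mathcomp Require Import mpoly.
Set Implicit Arguments. Unset Strict Implicit. Unset Printing Implicit Defensive.
Import Order.TTheory GRing.Theory Num.Theory.
Local Open Scope ring_scope.

(* Split the variables into those of the matrices of one parity and those of
   the other, and arrange the coefficients of a polynomial in a matrix whose
   rows are indexed by monomials in the first group and whose columns are
   indexed by monomials in the second, of total degree d.  For the product
   polynomial, with rows and columns indexed by the n^(d-1) closed walks
   1 -> q_1 -> ... -> q_(d-1) -> 1, this matrix is the identity, because
   either half of a walk monomial determines the walk.  A product of k linear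
   forms, each split into its two halves, expands into 2^k products of a
   polynomial in the first group by one in the second; each has rank at most
   one, and none contributes unless k = d.  So every product gate adds rank at
   most 2^d, and n^(d-1) <= 2^d * #(product gates). *)

Lemma mxrank_sum (F : fieldType) (m n : nat) (I : Type) (r : seq I)
    (A : I -> 'M[F]_(m, n)) :
  (\rank (\sum_(i <- r) A i)%R <= \sum_(i <- r) \rank (A i))%N.
Proof.
apply: (big_ind2 (fun M k => \rank M <= k)%N) => // [|B k1 C k2 leB leC].
  by rewrite mxrank0.
exact: leq_trans (mxrank_add B C) (leq_add leB leC).
Qed.

Section MonomialsOff.
Variable N : nat.
Implicit Types (S : pred 'I_N) (m : 'X_{1..N}).

Definition mdeg_off S m : nat := (\sum_(v | ~~ S v) m v)%N.

Lemma mdeg_off0 S : mdeg_off S 0 = 0%N.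
Proof. by apply: big1 => v _; rewrite mnm0E. Qed.

Lemma mdeg_offD S : {morph mdeg_off S : m1 m2 / (m1 + m2)%MM >-> (m1 + m2)%N}.
Proof.
by move=> m1 m2; rewrite /mdeg_off -big_split; apply: eq_bigr => v _; rewrite mnmDE.
Qed.

(* [P \is 0.-homog for mdeg_off S] says that [P] only involves variables in [S]. *)
HB.instance Definition _ S :=
  isMeasure.Build N (mdeg_off S) (mdeg_off0 S) (mdeg_offD S).

Lemma mdeg_off_eq0P S m : reflect (forall v, ~~ S v -> m v = 0%N) (mdeg_off S m == 0%N).
Proof.
rewrite /mdeg_off sum_nat_eq0; apply: (iffP forall_inP) => h v /h; first exact/eqP.
by move=> ->.
Qed.

Lemma mdeg_off_U S v : S v -> mdeg_off S U_(v) = 0%N.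
Proof.
move=> Sv; apply/eqP/mdeg_off_eq0P => w Sw; rewrite mnm1E.
by apply/eqP; rewrite eqb0; apply: contraNneq Sw => <-.
Qed.

Definition mnm_restr S m : 'X_{1..N} := [multinom if S v then m v else 0%N | v < N].

Lemma mnm_restrE S m v : mnm_restr S m v = if S v then m v else 0%N.
Proof. exact: mnmE. Qed.

Lemma mdeg_off_restr S m : mdeg_off S (mnm_restr S m) = 0%N.
Proof. by apply/eqP/mdeg_off_eq0P => v /negbTE Sv; rewrite mnm_restrE Sv. Qed.

Lemma mnm_restr_split S m : (mnm_restr S m + mnm_restr (predC S) m)%MM = m.
Proof. by apply/mnmP => v; rewrite mnmDE !mnm_restrE /=; case: (S v); rewrite ?addn0. Qed.

Lemma mnm_restr0 S : mnm_restr S 0 = 0%MM.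
Proof. by apply/mnmP => v; rewrite mnm_restrE mnm0E if_same. Qed.

Lemma mnm_restrD S : {morph mnm_restr S : m1 m2 / (m1 + m2)%MM}.
Proof. by move=> m1 m2; apply/mnmP => v; rewrite mnmDE !mnm_restrE mnmDE; case: (S v). Qed.

Lemma mdeg_restrU S v : mdeg (mnm_restr S U_(v)) = S v.
Proof.
rewrite mdegE (bigD1 v) //= big1 => [|w wv].
  by rewrite mnm_restrE mnm1E eqxx addn0; case: (S v).
by rewrite mnm_restrE mnm1E eq_sym (negbTE wv) if_same.
Qed.

Lemma eq_addm_off S a b x y :
    mdeg_off S a = 0%N -> mdeg_off (predC S) b = 0%N ->
    mdeg_off S x = 0%N -> mdeg_off (predC S) y = 0%N ->
  (a + b == x + y)%MM = (a == x) && (b == y).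
Proof.
move=> /eqP/mdeg_off_eq0P a0 /eqP/mdeg_off_eq0P b0.
move=> /eqP/mdeg_off_eq0P x0 /eqP/mdeg_off_eq0P y0.
apply/eqP/andP => [e|[/eqP -> /eqP ->]] //.
have ev v : (a v + b v = x v + y v)%N by rewrite -!mnmDE e.
suff ax : a = x.
  split; apply/eqP => //; apply/mnmP => v.
  by apply/eqP; rewrite -(eqn_add2l (x v)) -{1}ax ev.
apply/mnmP => v; case: (boolP (S v)) => Sv; last by rewrite a0 ?x0.
by have := ev v; rewrite b0 ?y0 ?negbK // !addn0.
Qed.

End MonomialsOff.

Section PolynomialsOff.
Variables (F : fieldType) (N : nat).
Implicit Types (S : pred 'I_N) (P Q : {mpoly F[N]}).

Lemma mcoeffM_off S P Q x y :
    P \is 0.-homog for (mdeg_off S) -> Q \is 0.-homog for (mdeg_off (predC S)) ->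
    mdeg_off S x = 0%N -> mdeg_off (predC S) y = 0%N ->
  (P * Q)@_(x + y) = P@_x * Q@_y.
Proof.
move=> /dhomogP P0 /dhomogP Q0 x0 y0.
rewrite {1}[P]mpolyE {1}[Q]mpolyE mulr_suml raddf_sum /=.
have coefE (R : {mpoly F[N]}) z : \sum_(a <- msupp R) R@_a * (a == z)%:R = R@_z.
  by rewrite {3}[R]mpolyE raddf_sum /=; apply: eq_bigr => a _; rewrite mcoeffZ mcoeffX.
rewrite -[P@_x]coefE mulr_suml; apply: eq_big_seq => a aP.
rewrite -[Q@_y]coefE !mulr_sumr raddf_sum /=; apply: eq_big_seq => b bQ.
rewrite -scalerAl -scalerAr scalerA -mpolyXD mcoeffZ mcoeffX.
by rewrite (eq_addm_off (P0 _ aP) (Q0 _ bQ) x0 y0) -mulnb natrM mulrACA.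
Qed.

Definition linform (a : 'I_N -> F) : {mpoly F[N]} := \sum_v a v *: 'X_v.

Lemma linform_homog a : linform a \is 1.-homog.
Proof.
by apply: rpred_sum => v _; apply: rpredZ; rewrite (dhomogX _ _ _ U_(v)); apply/eqP/mdeg1.
Qed.

Lemma linform_on S a : (forall v, ~~ S v -> a v = 0) ->
  linform a \is 0.-homog for (mdeg_off S).
Proof.
move=> a0; apply: rpred_sum => v _; have [Sv|Sv] := boolP (S v).
  by apply: rpredZ; rewrite (dhomogX _ _ _ U_(v)); apply/eqP/mdeg_off_U.
by rewrite a0 // scale0r rpred0.
Qed.

Lemma linform_split S a :
  linform a = linform (fun v => if S v then a v else 0)
            + linform (fun v => if S v then 0 else a v).
Proof.
rewrite /linform -big_split /=; apply: eq_bigr => v _.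
by rewrite -scalerDl; case: (S v); rewrite ?addr0 ?add0r.
Qed.

Lemma prod_linform_homog (s : seq ('I_N -> F)) :
  \prod_(a <- s) linform a \is (size s).-homog.
Proof.
elim: s => [|a s IH]; first by rewrite big_nil dhomog1.
by rewrite big_cons -[size _]add1n; apply: dhomogM (linform_homog a) IH.
Qed.

Lemma prod_linform_split S (s : seq ('I_N -> F)) :
  exists L : seq ({mpoly F[N]} * {mpoly F[N]}),
    [/\ size L = (2 ^ size s)%N,
        \prod_(a <- s) linform a = \sum_(x <- L) x.1 * x.2 &
        forall x, x \in L -> x.1 \is 0.-homog for (mdeg_off S) /\
                             x.2 \is 0.-homog for (mdeg_off (predC S))].
Proof.
elim: s => [|a s [L [sizeL prodE onL]]].
  exists [:: (1, 1)]; split => [||x]; first by [].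
    by rewrite big_nil big_seq1 mulr1.
  by rewrite inE => /eqP -> /=; rewrite !dhomog1.
pose y := linform (fun v => if S v then a v else 0).
pose z := linform (fun v => if S v then 0 else a v).
have y_on : y \is 0.-homog for (mdeg_off S) by apply: linform_on => v /negbTE ->.
have z_on : z \is 0.-homog for (mdeg_off (predC S)).
  by apply: linform_on => v; rewrite negbK => ->.
exists ([seq (y * x.1, x.2) | x <- L] ++ [seq (x.1, z * x.2) | x <- L]); split.
- by rewrite size_cat !size_map sizeL expnS mul2n addnn.
- rewrite big_cons prodE (linform_split S) mulrDl !mulr_sumr big_cat !big_map /=.
  by congr (_ + _); apply: eq_bigr => x _; [rewrite mulrA | rewrite mulrCA].
- move=> x; rewrite mem_cat => /orP [] /mapP [w /onL [w1 w2] ->] /=;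
    by split => //; apply: (dhomogM (d := 0%N) (e := 0%N)).
Qed.

End PolynomialsOff.

Section CoefficientMatrix.
Variables (F : fieldType) (N : nat) (S : pred 'I_N) (K L : nat).
Variables (r : 'I_K -> 'X_{1..N}) (c : 'I_L -> 'X_{1..N}).
Hypothesis r_onS : forall i, mdeg_off S (r i) = 0%N.
Hypothesis c_onC : forall j, mdeg_off (predC S) (c j) = 0%N.

Definition coefmx (g : {mpoly F[N]}) : 'M[F]_(K, L) := \matrix_(i, j) g@_(r i + c j)%MM.

Lemma coefmx_sum (I : Type) (s : seq I) (G : I -> {mpoly F[N]}) :
  coefmx (\sum_(x <- s) G x) = \sum_(x <- s) coefmx (G x).
Proof.
apply/matrixP => i j; rewrite mxE raddf_sum summxE.
by apply: eq_bigr => x _; rewrite mxE.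
Qed.

Lemma coefmxZ a g : coefmx (a *: g) = a *: coefmx g.
Proof. by apply/matrixP => i j; rewrite !mxE mcoeffZ. Qed.

Lemma rank_coefmxM P Q :
    P \is 0.-homog for (mdeg_off S) -> Q \is 0.-homog for (mdeg_off (predC S)) ->
  (\rank (coefmx (P * Q)) <= 1)%N.
Proof.
move=> P_onS Q_onC.
have -> : coefmx (P * Q) = \col_i P@_(r i) *m \row_j Q@_(c j).
  apply/matrixP => i j; rewrite !mxE big_ord1 !mxE.
  exact: mcoeffM_off P_onS Q_onC (r_onS i) (c_onC j).
exact: leq_trans (mxrankM_maxl _ _) (rank_leq_col _).
Qed.

Lemma rank_coefmx_prod_linform (s : seq ('I_N -> F)) :
  (\rank (coefmx (\prod_(a <- s) linform a)) <= 2 ^ size s)%N.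
Proof.
have [M [sizeM -> M_on]] := prod_linform_split S s.
rewrite coefmx_sum -sizeM -sum1_size; apply: leq_trans (mxrank_sum _ _) _.
by rewrite big_seq [leqRHS]big_seq; apply: leq_sum => x /M_on [x1 x2]; exact: rank_coefmxM.
Qed.

Variable D : nat.
Hypothesis rc_deg : forall i j, mdeg (r i + c j)%MM = D.

Lemma coefmx_homog_eq0 k g : g \is k.-homog -> k != D -> coefmx g = 0.
Proof.
move=> g_homog kD; apply/matrixP => i j; rewrite !mxE.
by apply: dhomog_nemf_coeff g_homog _; rewrite /= rc_deg eq_sym.
Qed.

Lemma rank_coefmx_prod_linform_le (s : seq ('I_N -> F)) :
  (\rank (coefmx (\prod_(a <- s) linform a)) <= 2 ^ D)%N.
Proof.
have [<-|sD] := eqVneq (size s) D; first exact: rank_coefmx_prod_linform.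
by rewrite (coefmx_homog_eq0 (prod_linform_homog s) sD) mxrank0.
Qed.

Lemma rank_coefmx_sps_output (C : SPS F N) : sps_homogeneous C ->
  (\rank (coefmx (sps_output C)) <= np C * 2 ^ D)%N.
Proof.
move=> hom; rewrite coefmx_sum; apply: leq_trans (mxrank_sum _ _) _.
apply: (@leq_trans (\sum_(p < np C) 2 ^ D)%N); last by rewrite sum_nat_const card_ord.
apply: leq_sum => p _.
rewrite coefmxZ; apply: leq_trans (mxrank_scale _ _) _.
have -> : prod_val p = \prod_(a <- map (@coef _ _ C) (wires p)) linform a.
  rewrite big_map; apply: eq_bigr => b _.
  by rewrite /bottom_val hom mpolyC0 addr0.
exact: rank_coefmx_prod_linform_le.
Qed.

End CoefficientMatrix.

Section IteratedMatrixProduct.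
Variables (F : fieldType) (n' d' : nat).
Local Notation n := n'.+1.
Local Notation d := d'.+1.
Local Notation NV := (nvars n d).

Definition var_index (i : 'I_d) (a b : 'I_n) : 'I_NV := enum_rank ((i, a, b) : varT n d).

Lemma eq_var_index i a b j a' b' :
  (var_index i a b == var_index j a' b') = [&& i == j, a == a' & b == b'].
Proof. by rewrite (inj_eq enum_rank_inj) !xpair_eqE andbA. Qed.

Definition matvars (P : pred nat) : pred 'I_NV := fun v => P (enum_val v).1.1.

Lemma matvars_var P i a b : matvars P (var_index i a b) = P i.
Proof. by rewrite /matvars /var_index enum_rankK. Qed.

(* The monomial of the walk [w] through the matrices [js]: matrix [js_k] is
   entered at index [w_k] and left at [w_(k+1)]. *)
Fixpoint path_mnm (js : seq 'I_d) (w : seq 'I_n) : 'X_{1..NV} :=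
  match js, w with
  | i :: js', a :: ((b :: _) as w') => (U_(var_index i a b) + path_mnm js' w')%MM
  | _, _ => 0%MM
  end.

Fixpoint words (k : nat) : seq (seq 'I_n) :=
  if k is k'.+1 then [seq a :: q | a <- enum 'I_n, q <- words k'] else [:: [::]].

Lemma size_words k : size (words k) = (n ^ k)%N.
Proof. by elim: k => [|k IH] //=; rewrite size_allpairs size_enum_ord IH expnS. Qed.

Lemma size_mem_words k q : q \in words k -> size q = k.
Proof.
elim: k q => [|k IH] q /=; first by rewrite inE => /eqP ->.
by case/allpairsP => [[a t] [_ /IH <- ->]].
Qed.

Lemma words_uniq k : uniq (words k).
Proof.
elim: k => [|k IH] //=; apply: allpairs_uniq => //; first exact: enum_uniq.
by move=> [a1 q1] [a2 q2] _ _ /= [-> ->].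
Qed.

Lemma matprod_Amat_entry i0 js a b :
  matprod [seq Amat F n i | i <- i0 :: js] a b =
  \sum_(q <- words (size js)) 'X_[path_mnm (i0 :: js) (a :: rcons q b)].
Proof.
elim: js i0 a => [|i1 js IH] i0 a /=; first by rewrite mulmx1 big_seq1 /= addm0 mxE.
rewrite mxE big_allpairs_dep /= -big_enum /=; apply: eq_bigr => c _.
rewrite -/(matprod [seq Amat F n i | i <- i1 :: js]) IH mulr_sumr.
by apply: eq_bigr => q _; rewrite mpolyXD mxE.
Qed.

Lemma path_mnm_var js w i a b x0 : uniq js -> size w = (size js).+1 ->
  path_mnm js w (var_index i a b) =
  if i \in js then ((a == nth x0 w (index i js)) && (b == nth x0 w (index i js).+1) : nat)
  else 0%N.
Proof.
elim: js w => [|j js IH] [|a' [|b' w]] //=; first by rewrite mnm0E.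
move=> /andP [jNjs js_uniq] [size_w]; rewrite mnmDE mnm1E eq_var_index.
rewrite (IH _ js_uniq) /= ?size_w // inE; have [<-|ji] := eqVneq j i => /=.
  by rewrite (negbTE jNjs) addn0 [a' == a]eq_sym [b' == b]eq_sym.
by rewrite add0n.
Qed.

Lemma mdeg_restr_path_mnm (P : pred nat) js w : size w = (size js).+1 ->
  mdeg (mnm_restr (matvars P) (path_mnm js w)) = count (fun i : 'I_d => P i) js.
Proof.
elim: js w => [|i js IH] [|a [|b w]] //= => [_|[size_w]]; first by rewrite mnm_restr0 mdeg0.
by rewrite mnm_restrD mdegD mdeg_restrU matvars_var IH /= ?size_w.
Qed.

Definition walk (q : seq 'I_n) : seq 'I_n := ord0 :: rcons q ord0.

Lemma size_walk q : size (walk q) = (size q).+2.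
Proof. by rewrite /= size_rcons. Qed.
Definition walk_mnm (q : seq 'I_n) : 'X_{1..NV} := path_mnm (enum 'I_d) (walk q).

Lemma fpolyE : fpoly F n d = \sum_(q <- words d') 'X_[walk_mnm q].
Proof.
have [i0 [js [enumE size_js]]] : exists i0 js, enum 'I_d = i0 :: js /\ size js = d'.
  by move: (size_enum_ord d); case: (enum 'I_d) => [//|i0 js] [size_js]; exists i0, js.
by rewrite /fpoly /walk_mnm enumE /= matprod_Amat_entry size_js.
Qed.

Lemma walk_mnm_var q i a b : size q = d' ->
  walk_mnm q (var_index i a b) =
  ((a == nth ord0 (walk q) i) && (b == nth ord0 (walk q) i.+1) : nat).
Proof.
move=> size_q; rewrite /walk_mnm (path_mnm_var _ _ _ ord0) ?enum_uniq //.
  by rewrite mem_enum index_enum_ord.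
by rewrite size_walk size_enum_ord size_q.
Qed.

Lemma nth_walk q k : (k < size q)%N -> nth ord0 (walk q) k.+1 = nth ord0 q k.
Proof. by move=> kq; rewrite /walk /= nth_rcons kq. Qed.

(* The index [q_k] is shared by matrices [k] and [k+1], one of which is in [P]. *)
Lemma eq_restr_walk_mnm (P : pred nat) q t :
    (forall k, P k || P k.+1) -> size q = d' -> size t = d' ->
  (mnm_restr (matvars P) (walk_mnm q) == mnm_restr (matvars P) (walk_mnm t)) = (q == t).
Proof.
move=> P_adj size_q size_t; apply/eqP/eqP => [e|-> //].
have walk_eq (i : 'I_d) : P i ->
    nth ord0 (walk q) i = nth ord0 (walk t) i /\
    nth ord0 (walk q) i.+1 = nth ord0 (walk t) i.+1.
  move=> Pi; pose v := var_index i (nth ord0 (walk q) i) (nth ord0 (walk q) i.+1).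
  have := congr1 (fun m : 'X_{1..NV} => m v) e.
  rewrite /= /v !mnm_restrE !matvars_var Pi !walk_mnm_var // !eqxx /=.
  by case: eqP => // ->; case: eqP.
apply: (@eq_from_nth _ ord0) => [|k]; first by rewrite size_q size_t.
rewrite size_q => k_lt; have k1_lt : (k.+1 < d)%N by [].
case/orP: (P_adj k) => [Pk|Pk1].
  have := walk_eq (inord k); rewrite inordK ?(ltnW k1_lt) // => /(_ Pk) [_].
  by rewrite !nth_walk ?size_q ?size_t.
have := walk_eq (inord k.+1); rewrite inordK // => /(_ Pk1) [+ _].
by rewrite !nth_walk ?size_q ?size_t.
Qed.

Local Notation Sodd := (matvars odd).
Local Notation K := (size (words d')).

Definition word (i : 'I_K) : seq 'I_n := nth [::] (words d') i.

Lemma size_word i : size (word i) = d'.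
Proof. by apply: size_mem_words; rewrite mem_nth. Qed.

Definition row_mnm (i : 'I_K) : 'X_{1..NV} := mnm_restr Sodd (walk_mnm (word i)).
Definition col_mnm (j : 'I_K) : 'X_{1..NV} :=
  mnm_restr (matvars (predC odd)) (walk_mnm (word j)).

Lemma row_mnm_onS i : mdeg_off Sodd (row_mnm i) = 0%N.
Proof. exact: mdeg_off_restr. Qed.

Lemma col_mnm_onC j : mdeg_off (predC Sodd) (col_mnm j) = 0%N.
Proof. exact: mdeg_off_restr. Qed.

Lemma mdeg_row_col i j : mdeg (row_mnm i + col_mnm j)%MM = d.
Proof.
rewrite mdegD !mdeg_restr_path_mnm ?size_walk ?size_enum_ord ?size_word //.
by rewrite count_predC size_enum_ord.
Qed.

Lemma coefmx_fpoly : coefmx row_mnm col_mnm (fpoly F n d) = 1%:M.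
Proof.
have eq_walk_mnm q i j : size q = d' ->
    (walk_mnm q == row_mnm i + col_mnm j)%MM = (q == word i) && (q == word j).
  move=> size_q; rewrite -{1}(mnm_restr_split Sodd (walk_mnm q)).
  rewrite (eq_addm_off (mdeg_off_restr _ _) (mdeg_off_restr _ _))
    ?row_mnm_onS ?col_mnm_onC //.
  by rewrite !eq_restr_walk_mnm ?size_word // => k /=; case: (odd k).
apply/matrixP => i j; rewrite !mxE fpolyE raddf_sum /=.
rewrite (bigD1_seq (word i)) ?mem_nth ?words_uniq //= big1_seq.
  by rewrite mcoeffX eq_walk_mnm ?size_word // eqxx /= addr0 /word nth_uniq ?words_uniq.
move=> q /andP [qi /size_mem_words size_q].
by rewrite mcoeffX eq_walk_mnm // (negbTE qi).
Qed.

Lemma matprod_sps_bound (C : SPS F NV) :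
  sps_homogeneous C -> sps_output C = fpoly F n d -> (n ^ d' <= np C * 2 ^ d)%N.
Proof.
move=> hom outE.
have := rank_coefmx_sps_output row_mnm_onS col_mnm_onC mdeg_row_col hom.
by rewrite outE coefmx_fpoly mxrank1 size_words.
Qed.

End IteratedMatrixProduct.

Theorem theorem5 :
  exists c : rat, 0 < c /\
    forall (F : fieldType) (n d : nat), (1 <= n)%N -> (1 <= d)%N ->
    forall C : SPS F (nvars n d),
      sps_homogeneous C -> sps_output C = fpoly F n d ->
      c * (n ^ d.-1)%:R / (2 ^ d)%:R <= (sps_size C)%:R.
Proof.
exists 1; split => // F [//|n'] [//|d'] _ _ C hom outE.
have np_le_size : (np C <= sps_size C)%N by rewrite /sps_size addn1 ltnW // ltnS leq_addl.
rewrite mul1r ler_pdivrMr ?ltr0n ?expn_gt0 // -natrM ler_nat.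
exact: leq_trans (matprod_sps_bound hom outE) (leq_mul np_le_size (leqnn _)).
Qed.
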